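(* Suppose $F$ is symmetric ($F(-i)=1-F(i)$ for all $i$) and fix $R\in(0,1)$. (i) If the receiver obtains only buy recommendations (resp. only don't-buy recommendations), then as their number tends to infinity the posterior probability of $(1,1)$ (resp. $(0,0)$) converges to $1$: $\lim_{b\to\infty}p_H(b,0)=1$ and $\lim_{d\to\infty}p_L(0,d)=1$. (ii) If the receiver obtains mixed recommendations, then for all $b,d>0$, $p_1(b,d)/p_2(b,d)=q_1/q_2$ and $p_H(b,d)=p_L(b,d)=0$.
   Context: Setting. Consumer types are $i\in[-1/2,1/2]$, distributed according to a continuous cumulative distribution function $F$ with full support on $[-1/2,1/2]$. A product has a quality vector $(Q_1,Q_2)\in\{0,1\}^2$; a type-$i$ consumer gets payoff $(1/2+i)Q_1+(1/2-i)Q_2$. The versions $(1,1),(1,0),(0,1),(0,0)$ have prior probabilities $q_H,q_1,q_2,q_L$, all strictly positive and summing to $1$. Given a threshold $R\in(0,1)$, each sender, with type drawn from $F$ independently of the product and of the other senders, gives a buy recommendation if her payoff from the product is at least $R$ and a don't-buy recommendation otherwise. Let $\phi_1(R)=1-F(R-1/2)$, $\phi_2(R)=F(1/2-R)$. After observing $b$ buy and $d$ don't-buy recommendations ($b+d>0$), the receiver's Bayesian posterior $(p_H(b,d),p_1(b,d),p_2(b,d),p_L(b,d))$ over $(1,1),(1,0),(0,1),(0,0)$ is proportional to $(q_H\mathbf 1[d=0],\ q_1\phi_1(R)^b(1-\phi_1(R))^d,\ q_2\phi_2(R)^b(1-\phi_2(R))^d,\ q_L\mathbf 1[b=0])$.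 *)

From Stdlib Require Import Reals.
From Coquelicot Require Import Coquelicot.
Open Scope R_scope.

Definition cdf_full_support (F : R -> R) : Prop :=
  (forall x y, x <= y -> F x <= F y) /\
  (forall x, continuity_pt F x) /\
  (forall x, x <= -1/2 -> F x = 0) /\
  (forall x, 1/2 <= x -> F x = 1) /\
  (forall x y, -1/2 <= x -> x < y -> y <= 1/2 -> F x < F y).

Definition symmetric_cdf (F : R -> R) : Prop :=
  forall i, -1/2 <= i <= 1/2 -> F (- i) = 1 - F i.

Definition phi1 (F : R -> R) (Rth : R) : R := 1 - F (Rth - 1/2).
Definition phi2 (F : R -> R) (Rth : R) : R := F (1/2 - Rth).

(* Unnormalized posterior weights after b buy and d don't-buy recommendations. *)
Definition wH (qH : R) (b d : nat) : R := qH * (if Nat.eqb d 0 then 1 else 0).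
Definition w1 (F : R -> R) (Rth q1 : R) (b d : nat) : R :=
  q1 * (phi1 F Rth) ^ b * (1 - phi1 F Rth) ^ d.
Definition w2 (F : R -> R) (Rth q2 : R) (b d : nat) : R :=
  q2 * (phi2 F Rth) ^ b * (1 - phi2 F Rth) ^ d.
Definition wL (qL : R) (b d : nat) : R := qL * (if Nat.eqb b 0 then 1 else 0).

Definition wsum F Rth qH q1 q2 qL b d : R :=
  wH qH b d + w1 F Rth q1 b d + w2 F Rth q2 b d + wL qL b d.

(* Bayesian posterior over (1,1),(1,0),(0,1),(0,0). *)
Definition pH F Rth qH q1 q2 qL b d := wH qH b d / wsum F Rth qH q1 q2 qL b d.
Definition p1 F Rth qH q1 q2 qL b d := w1 F Rth q1 b d / wsum F Rth qH q1 q2 qL b d.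
Definition p2 F Rth qH q1 q2 qL b d := w2 F Rth q2 b d / wsum F Rth qH q1 q2 qL b d.
Definition pL F Rth qH q1 q2 qL b d := wL qL b d / wsum F Rth qH q1 q2 qL b d.

(* Unanimous buy recommendations rule out (0,0) and leave the weights of
   (1,0) and (0,1) proportional to phi1^b and phi2^b, which decay
   geometrically since full support puts both phi's strictly inside (0,1);
   the weight of (1,1) stays q_H, so its posterior tends to 1 (symmetrically
   for don't-buy).  A mixed signal rules out (1,1) and (0,0), and symmetry of
   F gives phi1 = phi2, so the two likelihoods of (1,0) and (0,1) coincide
   and the posterior odds equal the prior odds. *)

From Stdlib Require Import Reals Lra Lia.
From Coquelicot Require Import Coquelicot.
Open Scope R_scope.

Lemma is_lim_seq_share_geom (a c1 c2 r1 r2 : R) :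
  0 < a -> Rabs r1 < 1 -> Rabs r2 < 1 ->
  is_lim_seq (fun n : nat => a / (a + c1 * r1 ^ n + c2 * r2 ^ n)) 1.
Proof.
  intros Ha Hr1 Hr2.
  assert (Hlim : forall c r, Rabs r < 1 ->
            is_lim_seq (fun n : nat => c * r ^ n) 0).
  { intros c r Hr. replace (Finite 0) with (Rbar_mult c 0) by (simpl; f_equal; ring).
    apply is_lim_seq_scal_l, is_lim_seq_geom, Hr. }
  replace (Finite 1) with (Finite (a / (a + 0 + 0))) by (f_equal; field; lra).
  apply is_lim_seq_div'; [apply is_lim_seq_const| |lra].
  apply is_lim_seq_plus'; [apply is_lim_seq_plus'; [apply is_lim_seq_const|]|];
    apply Hlim; assumption.
Qed.

Lemma cdf_full_support_interior (F : R -> R) (x : R) :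
  cdf_full_support F -> -1/2 < x < 1/2 -> 0 < F x < 1.
Proof.
  intros [_ [_ [F_lo [F_hi F_strict]]]] Hx.
  assert (F (-1/2) = 0) by (apply F_lo; lra).
  assert (F (1/2) = 1) by (apply F_hi; lra).
  assert (F (-1/2) < F x) by (apply F_strict; lra).
  assert (F x < F (1/2)) by (apply F_strict; lra).
  lra.
Qed.

Section Thresholds.

Variables (F : R -> R) (Rth : R).
Hypotheses (HF : cdf_full_support F) (HRth : 0 < Rth < 1).

Lemma phi1_in_open_unit : 0 < phi1 F Rth < 1.
Proof.
  unfold phi1.
  pose proof (cdf_full_support_interior F (Rth - 1/2) HF ltac:(lra)).
  lra.
Qed.

Lemma phi2_in_open_unit : 0 < phi2 F Rth < 1.
Proof. unfold phi2; apply cdf_full_support_interior; [exact HF | lra]. Qed.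

Lemma phi2_eq_phi1 : symmetric_cdf F -> phi2 F Rth = phi1 F Rth.
Proof.
  intros Hsym; unfold phi1, phi2.
  replace (1/2 - Rth) with (- (Rth - 1/2)) by ring.
  apply Hsym; lra.
Qed.

End Thresholds.

Section Posterior.

Variables (F : R -> R) (Rth qH q1 q2 qL : R).

Lemma pH_buy_only (b : nat) : (0 < b)%nat ->
  pH F Rth qH q1 q2 qL b 0 =
  qH / (qH + q1 * phi1 F Rth ^ b + q2 * phi2 F Rth ^ b).
Proof.
  intros Hb; destruct b as [|b]; [lia|].
  unfold pH, wsum, wH, w1, w2, wL; simpl Nat.eqb; cbv iota.
  f_equal; [ring|]; simpl pow; ring.
Qed.

Lemma pL_dont_buy_only (d : nat) : (0 < d)%nat ->
  pL F Rth qH q1 q2 qL 0 d =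
  qL / (qL + q1 * (1 - phi1 F Rth) ^ d + q2 * (1 - phi2 F Rth) ^ d).
Proof.
  intros Hd; destruct d as [|d]; [lia|].
  unfold pL, wsum, wH, w1, w2, wL; simpl Nat.eqb; cbv iota.
  f_equal; [ring|]; simpl pow; ring.
Qed.

Lemma pH_mixed (b d : nat) : (0 < d)%nat -> pH F Rth qH q1 q2 qL b d = 0.
Proof.
  intros Hd; destruct d as [|d]; [lia|].
  unfold pH, wH; simpl Nat.eqb; cbv iota; unfold Rdiv; ring.
Qed.

Lemma pL_mixed (b d : nat) : (0 < b)%nat -> pL F Rth qH q1 q2 qL b d = 0.
Proof.
  intros Hb; destruct b as [|b]; [lia|].
  unfold pL, wL; simpl Nat.eqb; cbv iota; unfold Rdiv; ring.
Qed.

Lemma wsum_mixed (b d : nat) : (0 < b)%nat -> (0 < d)%nat ->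
  wsum F Rth qH q1 q2 qL b d = w1 F Rth q1 b d + w2 F Rth q2 b d.
Proof.
  intros Hb Hd; destruct b as [|b]; [lia|]; destruct d as [|d]; [lia|].
  unfold wsum, wH, wL; simpl Nat.eqb; cbv iota; ring.
Qed.

Lemma p1_div_p2 (b d : nat) :
  wsum F Rth qH q1 q2 qL b d <> 0 -> w2 F Rth q2 b d <> 0 ->
  p1 F Rth qH q1 q2 qL b d / p2 F Rth qH q1 q2 qL b d =
  w1 F Rth q1 b d / w2 F Rth q2 b d.
Proof. intros Hs Hw2; unfold p1, p2; field; auto. Qed.

End Posterior.

Lemma likelihood_pos (q p : R) (b d : nat) :
  0 < q -> 0 < p < 1 -> 0 < q * p ^ b * (1 - p) ^ d.
Proof.
  intros Hq Hp.
  apply Rmult_lt_0_compat; [apply Rmult_lt_0_compat|]; auto; apply pow_lt; lra.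
Qed.

Lemma w1_div_w2_same_phi (F : R -> R) (Rth q1 q2 : R) (b d : nat) :
  phi2 F Rth = phi1 F Rth -> 0 < phi1 F Rth < 1 -> 0 < q2 ->
  w1 F Rth q1 b d / w2 F Rth q2 b d = q1 / q2.
Proof.
  intros Hphi Hp Hq2; unfold w1, w2; rewrite Hphi.
  assert (0 < phi1 F Rth ^ b) by (apply pow_lt; lra).
  assert (0 < (1 - phi1 F Rth) ^ d) by (apply pow_lt; lra).
  field; repeat split; lra.
Qed.

Theorem lemma3 (F : R -> R) (qH q1 q2 qL Rth : R) :
  cdf_full_support F ->
  symmetric_cdf F ->
  0 < qH -> 0 < q1 -> 0 < q2 -> 0 < qL -> qH + q1 + q2 + qL = 1 ->
  0 < Rth < 1 ->
  (is_lim_seq (fun b : nat => pH F Rth qH q1 q2 qL b 0%nat) 1 /\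
   is_lim_seq (fun d : nat => pL F Rth qH q1 q2 qL 0%nat d) 1) /\
  (forall b d : nat, (0 < b)%nat -> (0 < d)%nat ->
     p1 F Rth qH q1 q2 qL b d / p2 F Rth qH q1 q2 qL b d = q1 / q2 /\
     pH F Rth qH q1 q2 qL b d = 0 /\
     pL F Rth qH q1 q2 qL b d = 0).
Proof.
  intros HF Hsym HqH Hq1 Hq2 HqL _ HRth.
  pose proof (phi1_in_open_unit F Rth HF HRth) as Hphi1.
  pose proof (phi2_in_open_unit F Rth HF HRth) as Hphi2.
  split; [split|].
  - eapply is_lim_seq_ext_loc.
    + exists 1%nat; intros b Hb; symmetry; apply pH_buy_only; lia.
    + apply is_lim_seq_share_geom; [|apply Rabs_def1..]; lra.
  - eapply is_lim_seq_ext_loc.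
    + exists 1%nat; intros d Hd; symmetry; apply pL_dont_buy_only; lia.
    + apply is_lim_seq_share_geom; [|apply Rabs_def1..]; lra.
  - intros b d Hb Hd.
    pose proof (likelihood_pos q1 _ b d Hq1 Hphi1) as Hw1.
    pose proof (likelihood_pos q2 _ b d Hq2 Hphi2) as Hw2.
    fold (w1 F Rth q1 b d) in Hw1; fold (w2 F Rth q2 b d) in Hw2.
    split; [|split; [apply pH_mixed | apply pL_mixed]; assumption].
    rewrite p1_div_p2 by (try rewrite wsum_mixed by assumption; lra).
    apply w1_div_w2_same_phi; auto using phi2_eq_phi1.
Qed.
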